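(* In the setting of the context, suppose $\mathbf H$ admits dual Specht modules $\{S_\lambda\}_{\lambda\in\Lambda}$ and that $\mathcal R^1\mathcal G(S_\lambda)=0$ for all $\lambda\in\Lambda$. Then: (a) an $\mathbf H$-module $N$ has a dual Specht filtration if and only if $\mathcal G(N)\in\mathbf S\text{-mod}$ has a $\Delta$-filtration; (b) $\mathcal G\circ\mathcal F(M)\cong M$ for every $\mathbf S$-module $M$ with a $\Delta$-filtration.
   Context: Let $K$ be a field, $\mathbf S,\mathbf H$ finite-dimensional $K$-algebras, $e=e^2\in\mathbf S$ with $e\mathbf Se\cong\mathbf H$; modules are finite-dimensional left modules. Schur functor $\mathcal F:\mathbf S\text{-mod}\to\mathbf H\text{-mod}$, $M\mapsto eM$; inverse Schur functor $\mathcal G:\mathbf H\text{-mod}\to\mathbf S\text{-mod}$, $N\mapsto\mathrm{Hom}_{\mathbf H}(e\mathbf S,N)$ (left exact, $\mathcal F\circ\mathcal G\cong\mathrm{id}$); $\mathcal R^1\mathcal G$ is its first right derived functor. $\mathbf H$ admits dual Specht modules if: (i) there is a family of pairwise non-isomorphic $\mathbf H$-modules $\{S^\lambda\}_{\lambda\in\Lambda}$ (Specht modules) indexed by a finite poset $(\Lambda,\le)$ such that $\mathrm{Ext}^1_{\mathbf H}(S^\lambda,S^\mu)\ne0$ implies $\lambda>\mu$; (ii) there are an algebra automorphism $\#$ and an algebra anti-automorphism $*$ of $\mathbf H$ and an order-reversing involution $\lambda\mapsto\lambda^t$ of $\Lambda$ with $S_{\lambda^t}\cong(S^\lambda)^\#$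 for all $\lambda$, where $V^\#$ is $V$ with $h$ acting by $h^\#$, $V^*=\mathrm{Hom}_K(V,K)$ with $(h\cdot f)(v)=f(h^*v)$, and $S_\lambda:=(S^\lambda)^*$ is the dual Specht module. Put $\Delta(\lambda):=\mathcal G(S_\lambda)$. A dual Specht filtration of $N$ is a chain $0=N_0\subset\cdots\subset N_t=N$ with each $N_i/N_{i-1}\cong S_{\mu_i}$ for some $\mu_i\in\Lambda$; a $\Delta$-filtration is defined likewise with subquotients of the form $\Delta(\mu)$. *)

From HB Require Import structures.
From mathcomp Require Import all_boot all_order all_algebra.
From mathcomp Require Import falgebra.
Set Implicit Arguments.
Unset Strict Implicit.
Unset Printing Implicit Defensive.
Import GRing.Theory.
Local Open Scope ring_scope.

Section Modules.
Variable K : fieldType.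

Record fmod (A : falgType K) := FMod {
  mcar : vectType K;
  mact : A -> 'End(mcar) }.
Arguments FMod {A} mcar mact.

Definition is_fmod (A : falgType K) (M : fmod A) : Prop :=
  [/\ forall (c : K) (a b : A), mact M (c *: a + b) = c *: mact M a + mact M b,
      forall a b : A, mact M (a * b) = (mact M a \o mact M b)%VF
    & mact M 1 = \1%VF].

Definition is_hom (A : falgType K) (M N : fmod A) (f : 'Hom(mcar M, mcar N)) :=
  forall a : A, (f \o mact M a = mact N a \o f)%VF.

Definition mod_iso (A : falgType K) (M N : fmod A) : Prop :=
  exists (f : 'Hom(mcar M, mcar N)) (g : 'Hom(mcar N, mcar M)),
    [/\ is_hom f, is_hom g, (g \o f = \1)%VF & (f \o g = \1)%VF].

(* Ext^1_A(X, Y) <> 0 : there is a non-split extension 0 -> Y -> E -> X -> 0 *)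
Definition ext1_nonzero (A : falgType K) (X Y : fmod A) : Prop :=
  exists (E : fmod A) (i : 'Hom(mcar Y, mcar E)) (p : 'Hom(mcar E, mcar X)),
    [/\ is_fmod E, is_hom i, is_hom p,
        [/\ lker i = 0%VS, limg p = fullv & limg i = lker p]
      & ~ exists s : 'Hom(mcar X, mcar E), is_hom s /\ (p \o s = \1)%VF].

(* submodules, and the statement that U'/U is isomorphic to X, for U <= U'
   submodules of M: there is an A-linear surjection U' ->> X with kernel U *)
Definition is_submod (A : falgType K) (M : fmod A) (U : {vspace mcar M}) :=
  forall a : A, (mact M a @: U <= U)%VS.

Definition subquot_iso (A : falgType K) (M : fmod A) (U U' : {vspace mcar M})
    (X : fmod A) : Prop :=
  exists g : 'Hom(mcar M, mcar X),
    [/\ (g @: U' = fullv)%VS, (U' :&: lker g = U)%VS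
      & forall (a : A) (v : mcar M), v \in U' -> g (mact M a v) = mact X a (g v)].

Definition has_filtration (A : falgType K) (I : Type) (D : I -> fmod A)
    (M : fmod A) : Prop :=
  exists (t : nat) (U : nat -> {vspace mcar M}),
    [/\ U 0%N = 0%VS, U t = fullv,
        forall i, (i <= t)%N -> is_submod (U i),
        forall i, (i < t)%N -> (U i <= U i.+1)%VS
      & forall i, (i < t)%N -> exists mu : I, subquot_iso (U i) (U i.+1) (D mu)].

Definition twist_mod (A : falgType K) (sh : A -> A) (V : fmod A) : fmod A :=
  FMod (mcar V) (fun h => mact V (sh h)).

Definition dual_mod (A : falgType K) (st : A -> A) (V : fmod A) : fmod A :=
  FMod ('Hom(mcar V, K^o))
       (fun h => linfun (fun f : 'Hom(mcar V, K^o) => (f \o mact V (st h))%VF)).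

Definition alg_automorphism (A : falgType K) (sh : A -> A) : Prop :=
  [/\ forall (c : K) (a b : A), sh (c *: a + b) = c *: sh a + sh b,
      forall a b : A, sh (a * b) = sh a * sh b, sh 1 = 1 & bijective sh].

Definition alg_antiautomorphism (A : falgType K) (st : A -> A) : Prop :=
  [/\ forall (c : K) (a b : A), st (c *: a + b) = c *: st a + st b,
      forall a b : A, st (a * b) = st b * st a, st 1 = 1 & bijective st].

Definition corner_iso (H S : falgType K) (e : S) (phi : H -> S) : Prop :=
  [/\ forall (c : K) (a b : H), phi (c *: a + b) = c *: phi a + phi b,
      forall a b : H, phi (a * b) = phi a * phi b, phi 1 = e,
      injective phi
    & (forall h : H, e * phi h * e = phi h) /\
      (forall s : S, exists h : H, phi h = e * s * e)].

Section Schur.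
Variables (H S : falgType K) (e : S) (phi : H -> S).

Definition eS : {vspace S} := (<[e]> * fullv)%VS.
Definition eS_act (h : H) : 'End(subvs_of eS) :=
  linfun (fun x : subvs_of eS => vsproj eS (phi h * vsval x)).
Definition eS_mod : fmod H := FMod (subvs_of eS) eS_act.
Definition eS_rmul (s : S) : 'End(subvs_of eS) :=
  linfun (fun x : subvs_of eS => vsproj eS (vsval x * s)).

Definition schurF (M : fmod S) : fmod H :=
  let eM := limg (mact M e) in
  FMod (subvs_of eM)
       (fun h => linfun (fun x : subvs_of eM => vsproj eM (mact M (phi h) (vsval x)))).

Definition homH_obstruction (N : fmod H) (f : 'Hom(subvs_of eS, mcar N)) :
    'Hom(H, 'Hom(subvs_of eS, mcar N)) :=
  linfun (fun h : H => (f \o eS_act h)%VF - (mact N h \o f)%VF).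
Definition homH (N : fmod H) : {vspace 'Hom(subvs_of eS, mcar N)} :=
  lker (linfun (@homH_obstruction N)).

Definition schurG (N : fmod H) : fmod S :=
  FMod (subvs_of (homH N))
       (fun s => linfun (fun f : subvs_of (homH N) =>
                   vsproj (homH N) (vsval f \o eS_rmul s)%VF)).
End Schur.

End Modules.

(* G = Hom_H(eS, -) is left exact and R^1 G = Ext^1_H(eS, -).  Let
   g : U' ->> S_mu be a step of a dual Specht filtration of N, with kernel U.
   An H-map eS -> S_mu lifts K-linearly to f : eS -> U'; the defect
   (a, x) |-> f (a x) - a f(x) of f, pushed along g, is a 1-cocycle, hence a
   coboundary because Ext^1_H(eS, S_mu) = 0.  Correcting f by a lift of it
   moves the defect into U, and descending the filtration makes f H-linear.
   So G is exact along the filtration and the G(U_i) form a Delta-filtration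
   of G(N).  Conversely F is exact and FG = id, so evaluation at e carries a
   Delta-filtration of G(N) to a dual Specht filtration of N.  For (b), the
   unit M -> GF(M), m |-> (x |-> x m), is proved bijective step by step along
   the Delta-filtration, the key input being that the unit of each G(S_mu) is
   onto. *)

From HB Require Import structures.
From mathcomp Require Import all_boot all_order all_algebra.
From mathcomp Require Import falgebra.
From Stdlib Require Import Classical.
Import GRing.Theory Order.Theory.
Local Open Scope ring_scope.
Set Implicit Arguments.
Unset Strict Implicit.
Unset Printing Implicit Defensive.

Lemma linfunE_linear (K : fieldType) (aT rT : vectType K) (f : aT -> rT) :
  (forall a x y, f (a *: x + y) = a *: f x + f y) -> linfun f =1 f.
Proof.
move=> lf.
pose F : {linear aT -> rT} := HB.pack f (GRing.isLinear.Build K aT rT *:%R f lf).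
exact: (lfunE F).
Qed.

Lemma lfun_section_in (K : fieldType) (vT wT : vectType K) (U : {vspace vT})
    (g : 'Hom(vT, wT)) :
  (g @: U = fullv)%VS -> exists r : 'Hom(wT, vT), forall y, r y \in U /\ g (r y) = y.
Proof.
move=> gU; pose gP := (g \o projv U)%VF.
have gPfull : limg gP = fullv by rewrite limg_comp limg_proj gU.
exists (projv U \o gP^-1)%VF => y; split; first by rewrite comp_lfunE memv_proj.
have := limg_lfunVK (f := gP) (x := y); rewrite gPfull memvf => /(_ isT).
by rewrite !comp_lfunE.
Qed.

Lemma id_sub_projv_eq0 (K : fieldType) (vT : vectType K) (U : {vspace vT}) v :
  ((\1 - projv U)%VF v == 0) = (v \in U).
Proof.
rewrite add_lfunE opp_lfunE id_lfunE subr_eq0; apply/eqP/idP => [->|vU].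
  exact: memv_proj.
by rewrite projv_id.
Qed.

Section Modules.
Variables (K : fieldType) (A : falgType K).
Implicit Types (M N X Y : fmod A).

Section Action.
Variables (M : fmod A) (fM : is_fmod M).

Lemma fmod_actP c a b : mact M (c *: a + b) = c *: mact M a + mact M b.
Proof. by case: fM. Qed.

Lemma fmod_actM a b v : mact M (a * b) v = mact M a (mact M b v).
Proof. by case: fM => _ -> _; rewrite comp_lfunE. Qed.

Lemma fmod_act1 v : mact M 1 v = v.
Proof. by case: fM => _ _ ->; rewrite id_lfunE. Qed.

Lemma fmod_actD a b v : mact M (a + b) v = mact M a v + mact M b v.
Proof. by have := fmod_actP 1 a b; rewrite !scale1r => ->; rewrite add_lfunE. Qed.

Lemma fmod_actZ c a v : mact M (c *: a) v = c *: mact M a v.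
Proof.
have act0 : mact M 0 = 0.
  have E := fmod_actP 1 0 0; rewrite scale1r !addr0 scale1r in E.
  by apply: (addrI (mact M 0)); rewrite addr0 -E.
by have := fmod_actP c a 0; rewrite addr0 act0 addr0 => ->; rewrite scale_lfunE.
Qed.

End Action.

Lemma is_homP M N (f : 'Hom(mcar M, mcar N)) :
  is_hom f <-> forall a v, f (mact M a v) = mact N a (f v).
Proof.
split=> [fH a v | fH a]; last by apply/lfunP => v; rewrite !comp_lfunE fH.
by have /lfunP/(_ v) := fH a; rewrite !comp_lfunE.
Qed.

Lemma submod_act M (U : {vspace mcar M}) a v :
  is_submod U -> v \in U -> mact M a v \in U.
Proof. by move=> UM vU; apply: (subvP (UM a)); apply: memv_img. Qed.

Lemma bij_hom_mod_iso M N (f : 'Hom(mcar M, mcar N)) :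
  is_hom f -> (forall m, f m = 0 -> m = 0) -> (forall y, exists m, f m = y) ->
  mod_iso N M.
Proof.
move=> fH inj sur.
have k0 : lker f == 0%VS.
  apply/eqP/subv_anti; rewrite sub0v andbT; apply/subvP => m.
  by rewrite memv_ker memv0 => /eqP /inj ->.
have fK y : f (f^-1%VF y) = y.
  by apply: limg_lfunVK; have [m <-] := sur y; apply: memv_img; apply: memvf.
have finj : injective f by apply/lker0P.
exists (f^-1)%VF, f; split => //.
- apply/is_homP => a y; apply: finj.
  by have /is_homP -> := fH; rewrite !fK.
- by apply/lfunP => y; rewrite comp_lfunE fK id_lfunE.
- exact: lker0_compVf.
Qed.

Lemma dual_fmod (st : A -> A) M :
  alg_antiautomorphism st -> is_fmod M -> is_fmod (dual_mod st M).
Proof.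
case=> stL stM st1 _ [ML MM M1].
have dualE h (f : 'Hom(mcar M, K^o)) :
    mact (dual_mod st M) h f = (f \o mact M (st h))%VF.
  by rewrite linfunE_linear // => a u v; rewrite comp_lfunDl -comp_lfunZl.
split.
- move=> c a b; apply/lfunP => f; rewrite add_lfunE scale_lfunE !dualE.
  by rewrite stL ML comp_lfunDr -comp_lfunZr.
- by move=> a b; apply/lfunP => f; rewrite comp_lfunE !dualE stM MM comp_lfunA.
- by apply/lfunP => f; rewrite id_lfunE dualE st1 M1 comp_lfun1r.
Qed.

Definition hom_defect X N (f : 'Hom(mcar X, mcar N)) a x :=
  f (mact X a x) - mact N a (f x).

Lemma hom_defect0P X N (f : 'Hom(mcar X, mcar N)) :
  is_hom f <-> forall a x, hom_defect f a x = 0.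
Proof.
rewrite is_homP; split=> fH a x; first by rewrite /hom_defect fH subrr.
by apply/eqP; rewrite -subr_eq0; apply/eqP; exact: fH.
Qed.

Lemma hom_defectB X N (f f' : 'Hom(mcar X, mcar N)) a x :
  hom_defect (f - f') a x = hom_defect f a x - hom_defect f' a x.
Proof.
rewrite /hom_defect !add_lfunE !opp_lfunE linearB /= !opprB.
by rewrite addrACA [in RHS]addrACA [- _ + _]addrC.
Qed.

Section Defect.
Variables (X N : fmod A) (fX : is_fmod X) (fN : is_fmod N).
Variable f : 'Hom(mcar X, mcar N).

Lemma hom_defectPr a c x y :
  hom_defect f a (c *: x + y) = c *: hom_defect f a x + hom_defect f a y.
Proof. by rewrite /hom_defect !linearP /= scalerBr scalerN addrACA. Qed.

Lemma hom_defectPl c a b x :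
  hom_defect f (c *: a + b) x = c *: hom_defect f a x + hom_defect f b x.
Proof.
rewrite /hom_defect fmod_actP // add_lfunE scale_lfunE linearP /=.
by rewrite fmod_actD // fmod_actZ // scalerBr opprD addrACA.
Qed.

Lemma hom_defectM a b x :
  hom_defect f (a * b) x = hom_defect f a (mact X b x) + mact N a (hom_defect f b x).
Proof.
by rewrite /hom_defect !fmod_actM // linearB /= addrA subrK.
Qed.

End Defect.

(* The hypotheses say that [c] is a 1-cocycle of [A] with coefficients in
   [Hom_K(X, Y)]; an [A]-linear section of the extension [cocycle_ext] it
   defines is exactly a witness that [c] is a coboundary. *)
Section Cocycle.
Variables (X Y : fmod A) (fX : is_fmod X) (fY : is_fmod Y).
Variable c : A -> mcar X -> mcar Y.
Hypotheses (cPr : forall a k x y, c a (k *: x + y) = k *: c a x + c a y)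
  (cPl : forall k a b x, c (k *: a + b) x = k *: c a x + c b x)
  (cM : forall a b x, c (a * b) x = c a (mact X b x) + mact Y a (c b x)).

Lemma cocycle1 x : c 1 x = 0.
Proof.
have := cM 1 1 x; rewrite mul1r !fmod_act1 // => E.
by apply: (addrI (c 1 x)); rewrite addr0 -E.
Qed.

Lemma cocycle0r a : c a 0 = 0.
Proof.
have E := cPr a 1 0 0; rewrite scale1r !addr0 scale1r in E.
by apply: (addrI (c a 0)); rewrite addr0 -E.
Qed.

Definition cocycle_act a (p : mcar X * mcar Y) : mcar X * mcar Y :=
  (mact X a p.1, mact Y a p.2 + c a p.1).

Lemma cocycle_actP a k p q :
  cocycle_act a (k *: p + q) = k *: cocycle_act a p + cocycle_act a q.
Proof.
rewrite /cocycle_act /=; congr (_, _); first by rewrite linearP.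
by rewrite cPr linearP /= addrACA -scalerDr.
Qed.

Definition cocycle_ext : fmod A :=
  @FMod K A (mcar X * mcar Y)%type (fun a => linfun (cocycle_act a)).

Lemma cocycle_extE a p : mact cocycle_ext a p = cocycle_act a p.
Proof. by rewrite /= linfunE_linear // => k u v; apply: cocycle_actP. Qed.

Lemma cocycle_ext_fmod : is_fmod cocycle_ext.
Proof.
split.
- move=> k a b; apply/lfunP => p; rewrite add_lfunE scale_lfunE !cocycle_extE.
  rewrite /cocycle_act fmod_actP // cPl fmod_actD // fmod_actZ //.
  by rewrite add_lfunE scale_lfunE addrACA -scalerDr.
- move=> a b; apply/lfunP => p; rewrite comp_lfunE !cocycle_extE /cocycle_act /=.
  by rewrite !fmod_actM // cM linearD /= addrA addrAC.
- apply/lfunP => -[x y]; rewrite id_lfunE cocycle_extE /cocycle_act /=.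
  by rewrite !fmod_act1 // cocycle1 addr0.
Qed.

Definition cocycle_inj : 'Hom(mcar Y, mcar cocycle_ext) := linfun (fun y => (0, y)).

Definition cocycle_proj : 'Hom(mcar cocycle_ext, mcar X) := linfun fst.

Lemma cocycle_injE y : cocycle_inj y = (0, y).
Proof.
by rewrite linfunE_linear // => k u v; rewrite -[RHS]/(k *: 0 + 0, _) scaler0 addr0.
Qed.

Lemma cocycle_projE p : cocycle_proj p = p.1.
Proof. by rewrite linfunE_linear. Qed.

Lemma cocycle_ext_exact :
  [/\ is_hom cocycle_inj, is_hom cocycle_proj, lker cocycle_inj = 0%VS,
      limg cocycle_proj = fullv & limg cocycle_inj = lker cocycle_proj].
Proof.
split.
- apply/is_homP => a y; rewrite !cocycle_injE cocycle_extE /cocycle_act /=.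
  by rewrite linear0 cocycle0r addr0.
- by apply/is_homP => a p; rewrite !cocycle_projE cocycle_extE.
- apply: subv_anti; rewrite sub0v andbT; apply/subvP => p.
  by rewrite memv_ker cocycle_injE memv0 => /eqP [] ->.
- apply: subv_anti; rewrite subvf /=; apply/subvP => x _.
  by apply/memv_imgP; exists (x, 0); rewrite ?memvf ?cocycle_projE.
apply: subv_anti; apply/andP; split; apply/subvP => p.
  by case/memv_imgP => y _ ->; rewrite memv_ker cocycle_projE cocycle_injE.
rewrite memv_ker cocycle_projE => /eqP p1; apply/memv_imgP.
by exists p.2; rewrite ?memvf // cocycle_injE -p1; case: p p1.
Qed.

Lemma cocycle_coboundary : ~ ext1_nonzero X Y ->
  exists sig : 'Hom(mcar X, mcar Y),
    forall a x, sig (mact X a x) = mact Y a (sig x) + c a x.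
Proof.
move=> noext; have [s [sH sK]] : exists s : 'Hom(mcar X, mcar cocycle_ext),
    is_hom s /\ (cocycle_proj \o s = \1)%VF.
  apply: NNPP => nsplit; apply: noext; exists cocycle_ext, cocycle_inj, cocycle_proj.
  have [iH pH i0 pT ip] := cocycle_ext_exact.
  by split=> //; first exact: cocycle_ext_fmod.
have s1 x : (s x).1 = x.
  by move: sK => /lfunP/(_ x); rewrite comp_lfunE cocycle_projE id_lfunE.
pose sig : 'Hom(mcar X, mcar Y) := linfun (fun x => (s x).2).
have sigE x : sig x = (s x).2 by rewrite linfunE_linear // => k u v; rewrite linearP.
exists sig => a x; move/is_homP/(_ a x): sH; rewrite cocycle_extE !sigE => ->.
by rewrite /cocycle_act /= s1.
Qed.

End Cocycle.

Section Correction.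
Variables (X N : fmod A) (fX : is_fmod X) (fN : is_fmod N).

Definition absorbs_defects (U : {vspace mcar N}) :=
  forall f : 'Hom(mcar X, mcar N), (forall a x, hom_defect f a x \in U) ->
    exists2 tau : 'Hom(mcar X, mcar N), (forall x, tau x \in U) & is_hom (f - tau).

Lemma absorbs_defects0 : absorbs_defects 0.
Proof.
move=> f f0; exists 0 => [x|]; first by rewrite zero_lfunE mem0v.
by apply/hom_defect0P => a x; have := f0 a x; rewrite memv0 subr0 => /eqP.
Qed.

Lemma absorbs_defects_step (D : fmod A) (U U' : {vspace mcar N}) :
  is_fmod D -> ~ ext1_nonzero X D -> is_submod U' -> subquot_iso U U' D ->
  absorbs_defects U -> absorbs_defects U'.
Proof.
move=> fD noext U'N [g [gU gK gE]] absU f fU'.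
have inU v : v \in U' -> g v = 0 -> v \in U.
  by move=> vU' gv; rewrite -gK memv_cap vU' memv_ker gv eqxx.
have [sig sigE] : exists sig : 'Hom(mcar X, mcar D),
    forall a x, sig (mact X a x) = mact D a (sig x) + g (hom_defect f a x).
  apply: (cocycle_coboundary fX fD _ _ _ noext) => [a k x y|k a b x|a b x].
  - by rewrite hom_defectPr linearP.
  - by rewrite hom_defectPl // linearP.
  - by rewrite hom_defectM // linearD /= gE.
have [r rP] := lfun_section_in gU.
pose t1 := (r \o sig)%VF.
have t1U' x : t1 x \in U' by rewrite comp_lfunE (proj1 (rP _)).
have gt1 x : g (t1 x) = sig x by rewrite comp_lfunE (proj2 (rP _)).
have [|t2 t2U t2H] := absU (f - t1).
  have t1_defect a x : g (hom_defect t1 a x) = g (hom_defect f a x).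
    by rewrite linearB /= gE // !gt1 sigE addrAC subrr add0r.
  move=> a x; rewrite hom_defectB; apply: inU.
    by rewrite rpredB ?fU' // rpredB ?t1U' ?submod_act.
  by rewrite linearB /= t1_defect subrr.
have UU' : (U <= U')%VS by rewrite -gK capvSl.
exists (t1 + t2) => [x|]; last by rewrite opprD addrA.
by rewrite add_lfunE rpredD // (subvP UU').
Qed.

Lemma absorbs_defects_filtration I (D : I -> fmod A) t (U : nat -> {vspace mcar N}) :
  (forall mu, is_fmod (D mu)) -> (forall mu, ~ ext1_nonzero X (D mu)) ->
  U 0%N = 0%VS -> (forall i, (i <= t)%N -> is_submod (U i)) ->
  (forall i, (i < t)%N -> exists mu, subquot_iso (U i) (U i.+1) (D mu)) ->
  forall i, (i <= t)%N -> absorbs_defects (U i).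
Proof.
move=> fD noext U0 UN Usq.
elim=> [_|i IH lti]; first by rewrite U0; apply: absorbs_defects0.
have [mu U'U] := Usq i lti.
exact: absorbs_defects_step (fD mu) (noext mu) (UN _ lti) U'U (IH (ltnW lti)).
Qed.

End Correction.
End Modules.

Section Corner.
Variables (K : fieldType) (S H : falgType K) (e : S) (phi : H -> S).
Hypotheses (ee : e * e = e) (phi_corner : corner_iso e phi).

Local Notation eS := (eS e).
Local Notation schurG := (schurG e phi).
Local Notation schurF := (schurF e phi).
Local Notation homH := (homH e phi).

Lemma phiP c a b : phi (c *: a + b) = c *: phi a + phi b.
Proof. by case: phi_corner. Qed.

Lemma phiM a b : phi (a * b) = phi a * phi b.
Proof. by case: phi_corner. Qed.

Lemma phi1 : phi 1 = e.
Proof. by case: phi_corner. Qed.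

Lemma mul_e_phi h : e * phi h = phi h.
Proof.
case: phi_corner => _ _ _ _ [ephie _].
by rewrite -[in RHS]ephie -[in LHS]ephie !mulrA ee.
Qed.

Lemma mul_phi_e h : phi h * e = phi h.
Proof.
case: phi_corner => _ _ _ _ [ephie _].
by rewrite -[in RHS]ephie -[in LHS]ephie -!mulrA ee.
Qed.

Lemma mem_eS x : (x \in eS) = (e * x == x).
Proof.
apply/idP/eqP => [xeS|<-]; last by apply: memv_mul; [apply: memv_line | apply: memvf].
pose l : 'Hom(S, S) := linfun (fun y => e * y - y).
have lE y : l y = e * y - y.
  rewrite linfunE_linear // => k u v.
  by rewrite mulrDr -scalerAr scalerBr addrACA opprD.
have : (eS <= lker l)%VS.
  apply/prodvP => u v /vlineP[k ->] _.
  by rewrite memv_ker lE -scalerAl -scalerAr mulrA ee subrr.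
by move/subvP/(_ x xeS); rewrite memv_ker lE subr_eq0 => /eqP.
Qed.

Lemma mul_e_eS x : x \in eS -> e * x = x.
Proof. by rewrite mem_eS => /eqP. Qed.

Lemma eS_mulr x s : x \in eS -> x * s \in eS.
Proof. by rewrite !mem_eS mulrA => /eqP ->. Qed.

Lemma e_in_eS : e \in eS.
Proof. by rewrite mem_eS ee. Qed.

Definition e_eS : subvs_of eS := Subvs e_in_eS.

(* [phi_inv] inverts [phi] on its image [eSe]; it is junk elsewhere. *)
Definition phi_inv : 'Hom(S, H) := ((linfun phi)^-1)%VF.

Lemma phi_invK h : phi_inv (phi h) = h.
Proof.
have phiE a : linfun phi a = phi a by rewrite linfunE_linear //; apply: phiP.
have /lker0_lfunK : lker (linfun phi) == 0%VS.
  by apply/lker0P => a b; rewrite !phiE; case: phi_corner => _ _ _ + _; apply.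
by move=> /(_ h); rewrite phiE.
Qed.

Lemma phi_invKV x : x \in eS -> phi (phi_inv (x * e)) = x * e.
Proof.
case: phi_corner => _ _ _ _ [_ onto] xeS; have [h eh] := onto x.
have -> : x * e = phi h by rewrite eh mul_e_eS.
by rewrite phi_invK.
Qed.

Lemma eS_actE h x : vsval (eS_act e phi h x) = phi h * vsval x.
Proof.
rewrite linfunE_linear ?vsprojK ?mem_eS ?mulrA ?mul_e_phi //.
by move=> k u v; rewrite linearP /= mulrDr -scalerAr linearP.
Qed.

Lemma eS_mod_fmod : is_fmod (eS_mod e phi).
Proof.
split.
- move=> k a b; apply/lfunP => x; apply: subvs_inj.
  by rewrite add_lfunE scale_lfunE linearP /= !eS_actE phiP mulrDl -scalerAl.
- move=> a b; apply/lfunP => x; apply: subvs_inj.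
  by rewrite comp_lfunE !eS_actE phiM mulrA.
- apply/lfunP => x; apply: subvs_inj.
  by rewrite id_lfunE eS_actE phi1 mul_e_eS // subvsP.
Qed.

Lemma eS_rmulE s x : vsval (eS_rmul e s x) = vsval x * s.
Proof.
rewrite linfunE_linear ?vsprojK ?eS_mulr ?subvsP //.
by move=> k u v; rewrite linearP /= mulrDl -scalerAl linearP.
Qed.

Lemma eS_rmul_act s h x :
  eS_rmul e s (eS_act e phi h x) = eS_act e phi h (eS_rmul e s x).
Proof. by apply: subvs_inj; rewrite eS_rmulE !eS_actE eS_rmulE mulrA. Qed.

Section InverseSchur.
Variables (N : fmod H) (fN : is_fmod N).

Lemma homH_obstructionE f h :
  homH_obstruction phi f h = (f \o eS_act e phi h)%VF - (mact N h \o f)%VF.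
Proof.
rewrite linfunE_linear // => k a b.
have /= -> := fmod_actP eS_mod_fmod k a b; rewrite fmod_actP //.
rewrite comp_lfunDr comp_lfunDl -comp_lfunZr -comp_lfunZl.
by rewrite scalerBr opprD addrACA.
Qed.

Lemma homHP (f : 'Hom(subvs_of eS, mcar N)) :
  f \in homH N <-> is_hom (M := eS_mod e phi) f.
Proof.
rewrite memv_ker linfunE_linear; last first.
  move=> k u v; apply/lfunP => h; rewrite add_lfunE scale_lfunE !homH_obstructionE.
  rewrite comp_lfunDl comp_lfunDr -comp_lfunZr -comp_lfunZl.
  by rewrite scalerBr opprD addrACA.
split=> [/eqP/lfunP fH h | fH]; last first.
  by apply/eqP/lfunP => h; rewrite homH_obstructionE zero_lfunE fH subrr.
by apply/eqP; rewrite -subr_eq0 -homH_obstructionE fH zero_lfunE.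
Qed.

Lemma schurG_val_act (f : mcar (schurG N)) h x :
  vsval f (eS_act e phi h x) = mact N h (vsval f x).
Proof. by have /homHP/is_homP := subvsP f; apply. Qed.

Lemma schurG_actE s (f : mcar (schurG N)) x :
  vsval (mact (schurG N) s f) x = vsval f (eS_rmul e s x).
Proof.
have rmulH : (vsval f \o eS_rmul e s)%VF \in homH N.
  by apply/homHP/is_homP => h y; rewrite !comp_lfunE eS_rmul_act schurG_val_act.
rewrite /= linfunE_linear ?vsprojK ?comp_lfunE //.
by move=> k u v; rewrite linearP /= comp_lfunDl -comp_lfunZl linearP.
Qed.

Lemma schurG_eS_faithful (f : mcar (schurG N)) :
  (forall x : subvs_of eS, mact (schurG N) (vsval x) f = 0) -> f = 0.
Proof.
move=> f0; apply: subvs_inj; apply/lfunP => x.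
have -> : x = eS_rmul e (vsval x) e_eS.
  by apply: subvs_inj; rewrite eS_rmulE mul_e_eS ?subvsP.
by rewrite -schurG_actE f0 !zero_lfunE.
Qed.

(* Evaluation at [e] and [n |-> (x |-> (x e).n)], with [x e] in [eSe = H],
   identify [e G(N) = FG(N)] with [N]. *)
Definition evG : 'Hom(mcar (schurG N), mcar N) :=
  linfun (fun f : subvs_of (homH N) => vsval f e_eS).

Lemma evGE f : evG f = vsval f e_eS.
Proof.
by rewrite linfunE_linear // => k u v; rewrite linearP /= add_lfunE scale_lfunE.
Qed.

Definition embG_fun (n : mcar N) : 'Hom(subvs_of eS, mcar N) :=
  linfun (fun x : subvs_of eS => mact N (phi_inv (vsval x * e)) n).

Lemma embG_funE n x : embG_fun n x = mact N (phi_inv (vsval x * e)) n.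
Proof.
rewrite linfunE_linear // => k u v.
by rewrite linearP /= mulrDl -scalerAl linearP /= fmod_actD // fmod_actZ.
Qed.

Lemma embG_fun_homH n : embG_fun n \in homH N.
Proof.
apply/homHP/is_homP => h x; rewrite /= !embG_funE eS_actE -mulrA.
by rewrite -{1}(phi_invKV (subvsP x)) -phiM phi_invK fmod_actM.
Qed.

Definition embG : 'Hom(mcar N, mcar (schurG N)) :=
  linfun (fun n => Subvs (embG_fun_homH n)).

Lemma embGE n x : vsval (embG n) x = mact N (phi_inv (vsval x * e)) n.
Proof.
rewrite linfunE_linear ?embG_funE // => k u v; apply: subvs_inj.
by apply/lfunP => x'; rewrite /= add_lfunE scale_lfunE !embG_funE linearP.
Qed.

Lemma evG_embG n : evG (embG n) = n.
Proof. by rewrite evGE embGE /= ee -phi1 phi_invK fmod_act1. Qed.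

Lemma embG_evG f : embG (evG f) = mact (schurG N) e f.
Proof.
apply: subvs_inj; apply/lfunP => x; rewrite embGE schurG_actE evGE.
rewrite -schurG_val_act; congr (vsval f _); apply: subvs_inj.
by rewrite eS_rmulE eS_actE phi_invKV ?subvsP //= -mulrA ee.
Qed.

Lemma evG_act h f : evG (mact (schurG N) (phi h) f) = mact N h (evG f).
Proof.
rewrite !evGE schurG_actE -schurG_val_act; congr (vsval f _).
by apply: subvs_inj; rewrite eS_rmulE eS_actE /= mul_e_phi mul_phi_e.
Qed.

Lemma evG_e f : evG (mact (schurG N) e f) = evG f.
Proof.
rewrite !evGE schurG_actE; congr (vsval f _).
by apply: subvs_inj; rewrite eS_rmulE /= ee.
Qed.

(* The unit [G(N) -> GFG(N)] is onto: an [H]-linear [psi : eS -> e G(N)] is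
   [x |-> x d] for some [d]. *)
Lemma schurG_represent (psi : subvs_of eS -> mcar (schurG N)) :
  (forall k u v, psi (k *: u + v) = k *: psi u + psi v) ->
  (forall h x, psi (eS_act e phi h x) = mact (schurG N) (phi h) (psi x)) ->
  (forall x, mact (schurG N) e (psi x) = psi x) ->
  exists d, forall x, mact (schurG N) (vsval x) d = psi x.
Proof.
move=> psiP psiH psie.
pose d0 : 'Hom(subvs_of eS, mcar N) := linfun (fun y => evG (psi y)).
have d0E y : d0 y = evG (psi y).
  by rewrite linfunE_linear // => k u v; rewrite psiP linearP.
have d0H : d0 \in homH N.
  by apply/homHP/is_homP => h y; rewrite /= !d0E psiH evG_act.
exists (Subvs d0H) => x; apply: subvs_inj; apply/lfunP => y.
rewrite schurG_actE /= d0E.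
have -> : eS_rmul e (vsval x) y = eS_act e phi (phi_inv (vsval y * e)) x.
  apply: subvs_inj; rewrite eS_rmulE eS_actE phi_invKV ?subvsP //.
  by rewrite -mulrA mul_e_eS ?subvsP.
rewrite psiH evGE schurG_actE -[in RHS]psie schurG_actE; congr (vsval (psi x) _).
apply: subvs_inj; rewrite !eS_rmulE phi_invKV ?subvsP //=.
by rewrite mul_e_eS ?eS_mulr ?subvsP.
Qed.

End InverseSchur.

Section Unit.
Variables (M : fmod S) (fM : is_fmod M).
Local Notation eM := (limg (mact M e)).

Lemma act_e_mem_eM s v : mact M (e * s) v \in eM.
Proof. by rewrite fmod_actM // memv_img ?memvf. Qed.

Lemma eM_fix v : v \in eM -> mact M e v = v.
Proof. by case/memv_imgP => w _ ->; rewrite -fmod_actM // ee. Qed.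

Lemma schurF_actE h (x : subvs_of eM) :
  vsval (mact (schurF M) h x) = mact M (phi h) (vsval x).
Proof.
rewrite /= linfunE_linear ?vsprojK //; first by rewrite -mul_e_phi act_e_mem_eM.
by move=> k u v; rewrite !linearP.
Qed.

Lemma schurF_fmod : is_fmod (schurF M).
Proof.
split.
- move=> k a b; apply/lfunP => x; apply: subvs_inj.
  rewrite add_lfunE scale_lfunE linearP /= !schurF_actE phiP.
  by rewrite fmod_actD // fmod_actZ.
- move=> a b; apply/lfunP => x; apply: subvs_inj.
  by rewrite comp_lfunE !schurF_actE phiM fmod_actM.
- apply/lfunP => x; apply: subvs_inj.
  by rewrite id_lfunE schurF_actE phi1 eM_fix // subvsP.
Qed.

Definition schurGF_unit_fun (m : mcar M) : 'Hom(subvs_of eS, subvs_of eM) :=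
  linfun (fun x : subvs_of eS => vsproj eM (mact M (vsval x) m)).

Lemma schurGF_unit_funE m x : vsval (schurGF_unit_fun m x) = mact M (vsval x) m.
Proof.
rewrite linfunE_linear ?vsprojK //.
  by rewrite -(mul_e_eS (subvsP x)) act_e_mem_eM.
by move=> k u v; rewrite !linearP /= fmod_actD // fmod_actZ // linearP.
Qed.

Lemma schurGF_unit_fun_homH m : schurGF_unit_fun m \in homH (schurF M).
Proof.
apply/(homHP schurF_fmod)/is_homP => h x; apply: subvs_inj.
by rewrite /= schurGF_unit_funE schurF_actE schurGF_unit_funE eS_actE fmod_actM.
Qed.

Definition schurGF_unit : 'Hom(mcar M, mcar (schurG (schurF M))) :=
  linfun (fun m => Subvs (schurGF_unit_fun_homH m)).

Lemma schurGF_unitE m x : vsval (vsval (schurGF_unit m) x) = mact M (vsval x) m.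
Proof.
rewrite linfunE_linear ?schurGF_unit_funE // => k u v; apply: subvs_inj.
apply/lfunP => y; apply: subvs_inj.
by rewrite /= add_lfunE scale_lfunE linearP /= !schurGF_unit_funE linearP.
Qed.

Lemma schurGF_unit_hom : is_hom schurGF_unit.
Proof.
apply/is_homP => s m; apply: subvs_inj; apply/lfunP => x; apply: subvs_inj.
by rewrite (schurG_actE schurF_fmod) !schurGF_unitE eS_rmulE fmod_actM.
Qed.

Definition unit_injective_on (U : {vspace mcar M}) :=
  forall m, m \in U -> schurGF_unit m = 0 -> m = 0.

Definition unit_surjective_on (U : {vspace mcar M}) :=
  forall F : mcar (schurG (schurF M)), (forall x, vsval (vsval F x) \in U) ->
    exists2 m, m \in U & schurGF_unit m = F.

Lemma unit_injective_on0 : unit_injective_on 0.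
Proof. by move=> m; rewrite memv0 => /eqP. Qed.

Lemma unit_surjective_on0 : unit_surjective_on 0.
Proof.
move=> F F0; exists 0; rewrite ?mem0v // linear0; apply: subvs_inj; apply/lfunP => x.
by apply: subvs_inj; have := F0 x; rewrite memv0 => /eqP ->; rewrite zero_lfunE.
Qed.

Section UnitStep.
Variables (D : fmod H) (fD : is_fmod D) (U U' : {vspace mcar M}).
Hypotheses (U'M : is_submod U') (U'U : subquot_iso U U' (schurG D)).

Lemma unit_injective_step : unit_injective_on U -> unit_injective_on U'.
Proof.
have [g [_ gK gE]] := U'U; move=> injU m mU' m0; apply: injU => //.
rewrite -gK memv_cap mU' memv_ker; apply/eqP.
apply: (schurG_eS_faithful fD) => x; rewrite -gE // -schurGF_unitE m0.
by rewrite /= zero_lfunE linear0.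
Qed.

Lemma unit_surjective_step : unit_surjective_on U -> unit_surjective_on U'.
Proof.
have [g [gU gK gE]] := U'U; move=> surjU F FU'.
have inU v : v \in U' -> g v = 0 -> v \in U.
  by move=> vU' gv; rewrite -gK memv_cap vU' memv_ker gv eqxx.
pose psi x := g (vsval (vsval F x)).
have [d dE] : exists d, forall x, mact (schurG D) (vsval x) d = psi x.
  apply: schurG_represent => // [k u v|h x|x]; rewrite /psi.
  - by rewrite !linearP.
  - by rewrite (schurG_val_act schurF_fmod) schurF_actE gE.
  - by rewrite -gE ?eM_fix ?subvsP.
have /memv_imgP[m0 m0U' gm0] : d \in (g @: U')%VS by rewrite gU memvf.
have [|m1 m1U m1E] := surjU (F - schurGF_unit m0).
  move=> x; rewrite !linearB /= add_lfunE opp_lfunE linearB /= schurGF_unitE.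
  apply: inU; first by rewrite rpredB ?FU' ?submod_act.
  by rewrite linearB /= gE // -gm0 dE subrr.
have UU' : (U <= U')%VS by rewrite -gK capvSl.
exists (m0 + m1); first by rewrite rpredD // (subvP UU').
by rewrite linearD /= m1E addrC subrK.
Qed.

End UnitStep.

Lemma schurGF_unit_iso I (D : I -> fmod H) : (forall i, is_fmod (D i)) ->
  has_filtration (fun i => schurG (D i)) M -> mod_iso (schurG (schurF M)) M.
Proof.
move=> fD [t [U [U0 Ut UM _ Usq]]].
have bijU i : (i <= t)%N -> unit_injective_on (U i) /\ unit_surjective_on (U i).
  elim: i => [_|i IH lti].
    by rewrite U0; split; [apply: unit_injective_on0 | apply: unit_surjective_on0].
  have [mu U'U] := Usq i lti; have [injU surjU] := IH (ltnW lti).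
  split; first exact: (unit_injective_step (fD mu) U'U injU).
  exact: (unit_surjective_step (fD mu) (UM _ lti) U'U surjU).
have [inj surj] := bijU t (leqnn t); rewrite Ut in inj surj.
apply: (bij_hom_mod_iso schurGF_unit_hom) => [m|F]; first exact/inj/memvf.
by have [m _ <-] := surj F (fun x => memvf _); exists m.
Qed.

End Unit.

Section SchurGSub.
Variables (N : fmod H) (fN : is_fmod N).

(* [G(U)] inside [G(N)]: the [H]-maps with values in [U]. *)
Definition schurG_sub (U : {vspace mcar N}) : {vspace mcar (schurG N)} :=
  lker (linfun (fun f : subvs_of (homH N) => ((\1 - projv U) \o vsval f)%VF)).

Lemma schurG_subP U (f : mcar (schurG N)) :
  f \in schurG_sub U <-> forall x, vsval f x \in U.
Proof.
rewrite memv_ker linfunE_linear; last first.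
  by move=> k u v; rewrite linearP /= comp_lfunDr -comp_lfunZr.
split=> [/eqP/lfunP fU x | fU].
  by rewrite -id_sub_projv_eq0 -comp_lfunE fU zero_lfunE.
by apply/eqP/lfunP => x; apply/eqP; rewrite comp_lfunE zero_lfunE id_sub_projv_eq0.
Qed.

Lemma schurG_sub0 : schurG_sub 0 = 0%VS.
Proof.
apply/vspaceP => f; rewrite memv0; apply/idP/eqP => [/schurG_subP f0 | ->].
  by apply/subvs_inj/lfunP => x; apply/eqP; rewrite zero_lfunE -memv0.
by apply/schurG_subP => x; rewrite /= zero_lfunE mem0v.
Qed.

Lemma schurG_subT : schurG_sub fullv = fullv.
Proof. by apply/vspaceP => f; rewrite memvf; apply/schurG_subP => x; rewrite memvf. Qed.

Lemma schurG_subS U V : (U <= V)%VS -> (schurG_sub U <= schurG_sub V)%VS.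
Proof.
move=> UV; apply/subvP => f /schurG_subP fU.
by apply/schurG_subP => x; apply: (subvP UV).
Qed.

Lemma schurG_sub_submod U : is_submod (schurG_sub U).
Proof.
move=> s; apply/subvP => _ /memv_imgP[f /schurG_subP fU ->].
by apply/schurG_subP => x; rewrite schurG_actE.
Qed.

Section Postcomp.
Variables (D : fmod H) (fD : is_fmod D) (U U' : {vspace mcar N}).
Variable g : 'Hom(mcar N, mcar D).
Hypothesis gE : forall a v, v \in U' -> g (mact N a v) = mact D a (g v).

Definition schurG_postcomp : 'Hom(mcar (schurG N), mcar (schurG D)) :=
  linfun (fun f : subvs_of (homH N) => vsproj (homH D) (g \o vsval f)%VF).

Lemma schurG_postcompE f :
  f \in schurG_sub U' -> vsval (schurG_postcomp f) = (g \o vsval f)%VF.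
Proof.
move=> /schurG_subP fU'; have gfH : (g \o vsval f)%VF \in homH D.
  by apply/(homHP fD)/is_homP => h x; rewrite /= !comp_lfunE schurG_val_act ?gE.
rewrite linfunE_linear ?vsprojK // => k u v.
by rewrite linearP /= comp_lfunDr -comp_lfunZr linearP.
Qed.

Lemma schurG_postcomp_act s f : f \in schurG_sub U' ->
  schurG_postcomp (mact (schurG N) s f) = mact (schurG D) s (schurG_postcomp f).
Proof.
move=> fU'; have sfU' := submod_act s (schurG_sub_submod U') fU'.
apply/subvs_inj/lfunP => x.
rewrite schurG_postcompE // (schurG_actE fD) schurG_postcompE //.
by rewrite !comp_lfunE (schurG_actE fN).
Qed.

Lemma schurG_postcomp_ker : (U' :&: lker g = U)%VS ->
  (schurG_sub U' :&: lker schurG_postcomp = schurG_sub U)%VS.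
Proof.
move=> gK; have UU' : (U <= U')%VS by rewrite -gK capvSl.
apply/vspaceP => f; rewrite memv_cap memv_ker.
apply/andP/idP => [[fU' /eqP f0] | fU].
  apply/schurG_subP => x; move/schurG_subP: (fU') => /(_ x) fxU'.
  rewrite -gK memv_cap fxU' memv_ker; apply/eqP.
  by rewrite -comp_lfunE -schurG_postcompE // f0 /= zero_lfunE.
have fU' : f \in schurG_sub U' by apply: (subvP (schurG_subS UU')).
split=> //; apply/eqP/subvs_inj/lfunP => x; rewrite schurG_postcompE // comp_lfunE.
move/schurG_subP: fU => /(_ x); rewrite -gK memv_cap memv_ker => /andP[_ /eqP ->].
by rewrite /= zero_lfunE.
Qed.

Lemma schurG_postcomp_onto :
  is_submod U' -> (g @: U' = fullv)%VS -> (U' :&: lker g = U)%VS ->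
  absorbs_defects (eS_mod e phi) U ->
  (schurG_postcomp @: schurG_sub U' = fullv)%VS.
Proof.
move=> U'N gU gK absU; apply/vspaceP => psi; rewrite memvf.
have [r rP] := lfun_section_in gU.
pose f0 := (r \o vsval psi)%VF.
have f0U' x : f0 x \in U' by rewrite comp_lfunE (proj1 (rP _)).
have [h x|tau tauU tauH] := absU f0.
  rewrite -gK memv_cap rpredB ?submod_act ?f0U' //= memv_ker linearB /= gE //.
  by rewrite !comp_lfunE !(proj2 (rP _)) schurG_val_act // subrr.
have fH : (f0 - tau)%VF \in homH N by apply/homHP.
have UU' : (U <= U')%VS by rewrite -gK capvSl.
have fU' : (Subvs fH : mcar (schurG N)) \in schurG_sub U'.
  apply/schurG_subP => x /=; rewrite add_lfunE opp_lfunE rpredB //.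
  exact: (subvP UU').
apply/memv_imgP; exists (Subvs fH) => //; apply/subvs_inj/lfunP => x.
rewrite schurG_postcompE // comp_lfunE /= add_lfunE opp_lfunE linearB /=.
move: (tauU x); rewrite -gK memv_cap memv_ker => /andP[_ /eqP ->].
by rewrite subr0 comp_lfunE (proj2 (rP _)).
Qed.

End Postcomp.

Lemma schurG_subquot (D : fmod H) (U U' : {vspace mcar N}) :
  is_fmod D -> is_submod U' -> subquot_iso U U' D ->
  absorbs_defects (eS_mod e phi) U ->
  subquot_iso (schurG_sub U) (schurG_sub U') (schurG D).
Proof.
move=> fD U'N [g [gU gK gE]] absU; exists (schurG_postcomp g); split.
- exact: (schurG_postcomp_onto fD gE U'N gU gK absU).
- exact: (schurG_postcomp_ker fD gE gK).
- by move=> s f; apply: (schurG_postcomp_act fD gE).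
Qed.

End SchurGSub.

Lemma schurG_filtration I (D : I -> fmod H) (N : fmod H) :
  is_fmod N -> (forall i, is_fmod (D i)) ->
  (forall i, ~ ext1_nonzero (eS_mod e phi) (D i)) ->
  has_filtration D N -> has_filtration (fun i => schurG (D i)) (schurG N).
Proof.
move=> fN fD noext [t [U [U0 Ut UN Ule Usq]]].
have absU := absorbs_defects_filtration eS_mod_fmod fN fD noext U0 UN Usq.
exists t, (fun i => schurG_sub (U i)); split.
- by rewrite U0 schurG_sub0.
- by rewrite Ut schurG_subT.
- by move=> i _; apply: schurG_sub_submod.
- by move=> i lti; apply/schurG_subS/Ule.
- move=> i lti; have [mu U'U] := Usq i lti; exists mu.
  exact: (schurG_subquot fN (fD mu) (UN _ lti) U'U (absU i (ltnW lti))).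
Qed.

Section Reflect.
Variables (N D : fmod H) (fN : is_fmod N) (fD : is_fmod D).
Variables (W W' : {vspace mcar (schurG N)}).
Variable g : 'Hom(mcar (schurG N), mcar (schurG D)).
Hypotheses (W'N : is_submod W')
  (gE : forall s f, f \in W' -> g (mact (schurG N) s f) = mact (schurG D) s (g f)).

Definition schurG_descent : 'Hom(mcar N, mcar D) := (evG D \o g \o embG fN)%VF.

Lemma schurG_descentE w : w \in W' -> schurG_descent (evG N w) = evG D (g w).
Proof.
by move=> wW'; rewrite !comp_lfunE (embG_evG fN) gE ?(evG_e fD).
Qed.

Lemma schurG_descent_onto :
  (g @: W' = fullv)%VS -> (schurG_descent @: (evG N @: W') = fullv)%VS.
Proof.
move=> gU; apply/vspaceP => n; rewrite memvf.
have /memv_imgP[w wW' gw] : embG fD n \in (g @: W')%VS by rewrite gU memvf.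
apply/memv_imgP; exists (evG N w); first exact: memv_img.
by rewrite schurG_descentE // -gw (evG_embG fD).
Qed.

Lemma schurG_descent_ker : (W' :&: lker g = W)%VS ->
  ((evG N @: W') :&: lker schurG_descent = evG N @: W)%VS.
Proof.
move=> gK; have WW' : (W <= W')%VS by rewrite -gK capvSl.
apply/vspaceP => n; rewrite memv_cap memv_ker.
apply/andP/memv_imgP => [[/memv_imgP[w wW' ->]] | [w wW ->]].
  rewrite schurG_descentE // => /eqP gw0.
  exists (mact (schurG N) e w); last by rewrite (evG_e fN).
  by rewrite -gK memv_cap submod_act //= memv_ker gE // -(embG_evG fD) gw0 linear0.
split; first exact/memv_img/(subvP WW').
move: wW; rewrite -gK memv_cap memv_ker => /andP[wW' /eqP gw0].
by rewrite schurG_descentE // gw0 linear0.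
Qed.

Lemma schurG_descent_act h n : n \in (evG N @: W')%VS ->
  schurG_descent (mact N h n) = mact D h (schurG_descent n).
Proof.
case/memv_imgP => w wW' ->.
by rewrite -(evG_act fN) !schurG_descentE ?submod_act // gE // (evG_act fD).
Qed.

End Reflect.

Lemma schurG_subquot_reflect (N D : fmod H) (W W' : {vspace mcar (schurG N)}) :
  is_fmod N -> is_fmod D -> is_submod W' -> subquot_iso W W' (schurG D) ->
  subquot_iso (evG N @: W) (evG N @: W') D.
Proof.
move=> fN fD W'N [g [gU gK gE]]; exists (schurG_descent fN g); split.
- exact: (schurG_descent_onto fN fD gE gU).
- exact: (schurG_descent_ker fN fD W'N gE gK).
- by move=> h n; apply: (schurG_descent_act fN fD W'N gE).
Qed.

Lemma schurG_filtration_reflect I (D : I -> fmod H) (N : fmod H) :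
  is_fmod N -> (forall i, is_fmod (D i)) ->
  has_filtration (fun i => schurG (D i)) (schurG N) -> has_filtration D N.
Proof.
move=> fN fD [t [W [W0 Wt WN Wle Wsq]]].
exists t, (fun i => evG N @: W i)%VS; split.
- by rewrite W0 limg0.
- apply/vspaceP => n; rewrite memvf -(evG_embG fN n).
  by rewrite Wt memv_img ?memvf.
- move=> i lei h; apply/subvP => _ /memv_imgP[_ /memv_imgP[w wW ->] ->].
  by rewrite -(evG_act fN) memv_img // (submod_act _ (WN i lei)).
- by move=> i lti; apply/limgS/Wle.
- move=> i lti; have [mu W'W] := Wsq i lti; exists mu.
  exact: (schurG_subquot_reflect fN (fD mu) (WN _ lti) W'W).
Qed.

End Corner.

Theorem lemma8p4 (K : fieldType) (S H : falgType K) (e : S) (phi : H -> S)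
    (d : Order.disp_t) (Lam : finPOrderType d)
    (Sp : Lam -> fmod H) (sh st : H -> H) (tr : Lam -> Lam) :
  e * e = e ->
  corner_iso e phi ->
  (* (i) Specht modules *)
  (forall l, is_fmod (Sp l)) ->
  (forall l m, l != m -> ~ mod_iso (Sp l) (Sp m)) ->
  (forall l m, ext1_nonzero (Sp l) (Sp m) -> (m < l)%O) ->
  (* (ii) the automorphism #, the anti-automorphism *, the involution t *)
  alg_automorphism sh -> alg_antiautomorphism st ->
  (forall l, tr (tr l) = l) ->
  (forall l m, (l <= m)%O -> (tr m <= tr l)%O) ->
  (forall l, mod_iso (dual_mod st (Sp (tr l))) (twist_mod sh (Sp l))) ->
  (* R^1 G (S_lambda) = Ext^1_H(eS, S_lambda) = 0 *)
  (forall l, ~ ext1_nonzero (eS_mod e phi) (dual_mod st (Sp l))) ->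
  (forall N : fmod H, is_fmod N ->
     has_filtration (fun l => dual_mod st (Sp l)) N <->
     has_filtration (fun l => schurG e phi (dual_mod st (Sp l))) (schurG e phi N))
  /\
  (forall M : fmod S, is_fmod M ->
     has_filtration (fun l => schurG e phi (dual_mod st (Sp l))) M ->
     mod_iso (schurG e phi (schurF e phi M)) M).
Proof.
move=> ee phi_corner fSp _ _ _ st_anti _ _ _ noext.
have fD l : is_fmod (dual_mod st (Sp l)) by apply: dual_fmod.
split=> [N fN | M fM]; last exact: (schurGF_unit_iso ee phi_corner fM fD).
split; first exact: (schurG_filtration ee phi_corner fN fD noext).
exact: (schurG_filtration_reflect ee phi_corner fN fD).
Qed.
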